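(* Let $n>d\ge1$, let $X\in\mathbb{R}^{n\times d}$ with $X^\top X$ invertible, let $\theta^*\in\mathbb{R}^d$ with $\|\theta^*\|_2=1$, $y=X\theta^*$, and $\alpha\in\mathbb{R}\setminus\{0\}$. Let $q^{(0)}=\mathbf{0}_d$, $Z^{(0)}=\begin{bmatrix} X & y\\ q^{(0)\top} & \alpha\end{bmatrix}\in\mathbb{R}^{(n+1)\times(d+1)}$, $Q=I_{d+1}$, $P=\begin{bmatrix} I_{d} & \mathbf{0}_{d\times 1}\\ \mathbf{0}_{1\times d} & 0\end{bmatrix}$, let $T\ge1$ be the number of loops, and use step sizes $\eta^{(t)}=1/L$ for all $t$, where $L=\|X^\top X\|$ (spectral norm). Let $\kappa=\lambda_{\max}(X^\top X)/\lambda_{\min}(X^\top X)$. Then $$|\langle \mathsf{TF}(Z^{(0)};Q,P),\theta^*\rangle-\alpha|\le|\alpha|\cdot\exp\!\Big(-\frac{T}{2\kappa}\Big).$$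
   Context: For $Z\in\mathbb{R}^{(n+1)\times(d+1)}$ and $Q,P\in\mathbb{R}^{(d+1)\times(d+1)}$, the linear attention is $\mathsf{Attn}(Z;Q,P):=(M\circ(ZQZ^\top))ZP$, where $\circ$ is the entrywise (Hadamard) product and $M=\begin{bmatrix}\mathbf{0}_{n\times n} & \mathbf{0}_{n\times 1}\\ \mathbf{1}_{1\times n} & 0\end{bmatrix}\in\mathbb{R}^{(n+1)\times(n+1)}$. The linear looped transformer with loop number $T$ and step sizes $\eta^{(t)}>0$ is defined by $Z^{(t)}:=Z^{(t-1)}-\eta^{(t-1)}\mathsf{Attn}(Z^{(t-1)};Q,P)$ for $t\in\{1,\dots,T\}$, and $\mathsf{TF}(Z^{(0)};Q,P):=-\big(Z^{(T)}_{n+1,1:d}\big)^\top\in\mathbb{R}^d$, i.e. minus the first $d$ entries of the last row of $Z^{(T)}$. $\lambda_{\min},\lambda_{\max}$ denote the smallest and largest eigenvalues. *)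

From HB Require Import structures.
From mathcomp Require Import all_boot all_order all_algebra.
From mathcomp Require Import all_classical all_reals.
From mathcomp Require Import sequences exp.
Set Implicit Arguments. Unset Strict Implicit. Unset Printing Implicit Defensive.
Import Order.TTheory GRing.Theory Num.Theory.
Local Open Scope ring_scope.

Section Defs.
Variable R : realType.

Definition vnorm (m : nat) (v : 'cV[R]_m) : R := Num.sqrt (\sum_i v i 0 ^+ 2).

Definition vdot (m : nat) (u v : 'cV[R]_m) : R := \sum_i u i 0 * v i 0.

Definition spectral_norm (m : nat) (A : 'M[R]_m) : R :=
  sup [set r : R | exists v : 'cV[R]_m, vnorm v <= 1 /\ r = vnorm (A *m v)].

Definition is_lambda_max (m : nat) (A : 'M[R]_m) (l : R) : Prop :=
  eigenvalue A l /\ forall a, eigenvalue A a -> a <= l.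
Definition is_lambda_min (m : nat) (A : 'M[R]_m) (l : R) : Prop :=
  eigenvalue A l /\ forall a, eigenvalue A a -> l <= a.

Definition attn_mask (n : nat) : 'M[R]_(n + 1) :=
  block_mx (0 : 'M_(n, n)) (0 : 'M_(n, 1)) (const_mx 1 : 'M_(1, n)) (0 : 'M_(1, 1)).

Definition Attn (n d : nat) (Z : 'M[R]_(n + 1, d + 1)) (Q P : 'M[R]_(d + 1))
  : 'M[R]_(n + 1, d + 1) :=
  map2_mx (fun a b => a * b) (attn_mask n) (Z *m Q *m Z^T) *m Z *m P.

Fixpoint loopZ (n d : nat) (Z0 : 'M[R]_(n + 1, d + 1)) (Q P : 'M[R]_(d + 1))
  (eta : nat -> R) (t : nat) : 'M[R]_(n + 1, d + 1) :=
  match t with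
  | 0%N => Z0
  | t'.+1 => let Z := loopZ Z0 Q P eta t' in Z - eta t' *: Attn Z Q P
  end.

Definition TF (n d : nat) (Z0 : 'M[R]_(n + 1, d + 1)) (Q P : 'M[R]_(d + 1))
  (eta : nat -> R) (T : nat) : 'cV[R]_d :=
  \col_(j < d) - loopZ Z0 Q P eta T (rshift n (@ord0 0)) (lshift 1 j).

End Defs.

From HB Require Import structures.
From mathcomp Require Import all_boot all_order all_algebra.
From mathcomp Require Import all_classical all_reals.
From mathcomp Require Import sequences exp topology normedtype derive.
From mathcomp Require Import ring lra.
Set Implicit Arguments. Unset Strict Implicit. Unset Printing Implicit Defensive.
Import Order.TTheory GRing.Theory Num.Theory.
Import numFieldNormedType.Exports.
Local Open Scope ring_scope.

(* With [y = X theta] the attention update leaves [X], [y] and [alpha] untouched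
   and only moves the query row, which performs gradient descent on the least
   squares loss: after [t] loops it equals [alpha ((B^t theta)^T - theta^T)] with
   [B = I - eta X^T X], so the error is [alpha <B^T theta, theta>].  Minimizing the
   quadratic form of [X^T X] over the compact unit sphere gives the Rayleigh bounds
   [lmin |v|^2 <= v^T X^T X v <= lmax |v|^2]; hence [L = lmax] and
   [0 <= B <= (1 - 1/kappa) I], so [|<B^T theta, theta>| <= (1 - 1/kappa)^T <= exp (-T/kappa)]. *)

Section InnerProduct.
Variables (R : realType) (d : nat).
Implicit Types (u v w : 'cV[R]_d).

Lemma vdot_mx u v : vdot u v = (u^T *m v) 0 0.
Proof. by rewrite mxE; apply: eq_bigr => i _; rewrite mxE. Qed.

Lemma vdotC u v : vdot u v = vdot v u.
Proof. by apply: eq_bigr => i _; rewrite mulrC. Qed.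

Lemma vdotDl u v w : vdot (u + v) w = vdot u w + vdot v w.
Proof. by rewrite /vdot -big_split; apply: eq_bigr => i _; rewrite mxE mulrDl. Qed.

Lemma vdotZl (a : R) u w : vdot (a *: u) w = a * vdot u w.
Proof. by rewrite /vdot mulr_sumr; apply: eq_bigr => i _; rewrite mxE mulrA. Qed.

Lemma vdotNl u w : vdot (- u) w = - vdot u w.
Proof. by rewrite -scaleN1r vdotZl mulN1r. Qed.

Lemma vdotBl u v w : vdot (u - v) w = vdot u w - vdot v w.
Proof. by rewrite vdotDl vdotNl. Qed.

Lemma vdotDr u v w : vdot w (u + v) = vdot w u + vdot w v.
Proof. by rewrite vdotC vdotDl !(vdotC w). Qed.

Lemma vdotZr (a : R) u w : vdot w (a *: u) = a * vdot w u.
Proof. by rewrite vdotC vdotZl vdotC. Qed.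

Lemma vdotNr u w : vdot w (- u) = - vdot w u.
Proof. by rewrite vdotC vdotNl vdotC. Qed.

Lemma vdotBr u v w : vdot w (u - v) = vdot w u - vdot w v.
Proof. by rewrite vdotC vdotBl !(vdotC w). Qed.

Lemma vdot0l w : vdot 0 w = 0.
Proof. by rewrite -(scale0r 0) vdotZl mul0r. Qed.

Lemma vdot_self_ge0 v : 0 <= vdot v v.
Proof. by rewrite sumr_ge0 // => i _; rewrite -expr2 sqr_ge0. Qed.

Lemma vdot_self_eq0 v : (vdot v v == 0) = (v == 0).
Proof.
apply/idP/eqP => [|->]; last by rewrite vdot0l.
rewrite psumr_eq0 => [/allP v0|i _]; last by rewrite -expr2 sqr_ge0.
apply/matrixP => i j; rewrite (ord1 j) mxE.
by apply/eqP; rewrite -sqrf_eq0 expr2 (implyP (v0 i (mem_index_enum _))).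
Qed.

Lemma vdot_self_gt0 v : (0 < vdot v v) = (v != 0).
Proof. by rewrite lt_def vdot_self_eq0 vdot_self_ge0 andbT. Qed.

Lemma vnormE v : vnorm v = Num.sqrt (vdot v v).
Proof. by congr Num.sqrt; apply: eq_bigr => i _; rewrite expr2. Qed.

Lemma vnormZ (a : R) v : vnorm (a *: v) = `|a| * vnorm v.
Proof.
by rewrite !vnormE vdotZl vdotZr mulrA -expr2 sqrtrM ?sqr_ge0 // sqrtr_sqr.
Qed.

Lemma vdot_parallelogram u v :
  vdot (u + v) (u + v) + vdot (u - v) (u - v) = 2 * (vdot u u + vdot v v).
Proof. by rewrite !(vdotDl, vdotDr, vdotNl, vdotNr) (vdotC v u); ring. Qed.

Lemma vdot_cauchy_schwarz u w : vdot u w ^+ 2 <= vdot u u * vdot w w.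
Proof.
have [->|w0] := eqVneq w 0; first by rewrite vdotC !vdot0l expr0n mulr0.
have wp : 0 < vdot w w by rewrite vdot_self_gt0.
pose t := vdot u w / vdot w w.
have ht : t * vdot w w = vdot u w by rewrite mulfVK ?gt_eqF.
have := vdot_self_ge0 (u - t *: w).
rewrite !(vdotBl, vdotBr, vdotZl, vdotZr) (vdotC w u); nra.
Qed.

End InnerProduct.

Lemma vdot_mulmxr (R : realType) m n (A : 'M[R]_(m, n)) (u : 'cV[R]_m) (w : 'cV[R]_n) :
  vdot u (A *m w) = vdot (A^T *m u) w.
Proof. by rewrite !vdot_mx trmx_mul trmxK mulmxA. Qed.

Section QuadraticForm.
Variables (R : realType) (d : nat) (A : 'M[R]_d).
Hypothesis A_sym : A^T = A.
Implicit Types (u v : 'cV[R]_d).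

Definition qform v := vdot v (A *m v).

Lemma qformD u v : qform (u + v) = qform u + 2 * vdot u (A *m v) + qform v.
Proof.
rewrite /qform mulmxDr !(vdotDl, vdotDr) (vdot_mulmxr A v u) A_sym (vdotC _ u).
ring.
Qed.

Lemma qformZ (a : R) v : qform (a *: v) = a ^+ 2 * qform v.
Proof. by rewrite /qform -scalemxAr vdotZl vdotZr mulrA expr2. Qed.

Lemma qform_polarization u v :
  qform (u + v) - qform (u - v) = 4 * vdot u (A *m v).
Proof.
rewrite -(scaleN1r v) !qformD qformZ -scalemxAr vdotZr; ring.
Qed.

Hypothesis A_psd : forall v, 0 <= qform v.

(* Evaluate the form at [c - t A c] with [t = |A c|^2 / (qform (A c) + 1)]. *)
Lemma psd_qform_eq0 c : qform c = 0 -> A *m c = 0.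
Proof.
move=> qc0; apply/eqP; rewrite -vdot_self_eq0; apply/eqP.
pose a := vdot (A *m c) (A *m c); pose s := qform (A *m c).
have a0 : 0 <= a := vdot_self_ge0 _.
have s0 : 0 <= s := A_psd _.
pose t := a / (s + 1).
have ht : t * (s + 1) = a by rewrite mulfVK // gt_eqF // ltr_wpDl.
have := A_psd (c + (- t) *: (A *m c)).
rewrite qformD qc0 qformZ -scalemxAr vdotZr (vdot_mulmxr A c) A_sym -/a -/s => q_ge0.
have : 0 <= a * a * (- (s + 2)).
  have -> : a * a * (- (s + 2)) = (0 + 2 * (- t * a) + (- t) ^+ 2 * s) * (s + 1) ^+ 2.
    by rewrite -ht; ring.
  by rewrite mulr_ge0 // sqr_ge0.
nra.
Qed.

(* Polarization at [t A v] and [v], then [t = 1 / c]. *)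
Lemma psd_mulmx_bound (c : R) : 0 <= c -> (forall v, qform v <= c * vdot v v) ->
  forall v, vdot (A *m v) (A *m v) <= c ^+ 2 * vdot v v.
Proof.
move=> c0 A_le v.
pose a := vdot (A *m v) (A *m v); pose b := vdot v v.
have a0 : 0 <= a := vdot_self_ge0 _.
have b0 : 0 <= b := vdot_self_ge0 _.
have key t : 2 * t * a <= c * (t ^+ 2 * a + b).
  set x := t *: (A *m v).
  have polar : qform (x + v) - qform (x - v) = 4 * (t * a).
    by rewrite qform_polarization vdotZl.
  have para : vdot (x + v) (x + v) = 2 * (t ^+ 2 * a + b) - vdot (x - v) (x - v).
    have xx : vdot x x = t ^+ 2 * a by rewrite vdotZl vdotZr mulrA -expr2.
    by rewrite -xx -vdot_parallelogram addrK.
  have := A_le (x + v); rewrite para.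
  have := A_psd (x - v); have := mulr_ge0 c0 (vdot_self_ge0 (x - v)).
  nra.
rewrite -/a -/b; have [c_eq0|c_neq0] := eqVneq c 0.
  by have := key 1; rewrite c_eq0 !mul0r expr0n mul0r; nra.
have cp : 0 < c by rewrite lt_def c_neq0.
have ca : c^-1 * a <= c * b.
  have := key c^-1; rewrite (_ : c * _ = c^-1 * a + c * b); first lra.
  by field; rewrite gt_eqF.
have cc : c * c^-1 = 1 by rewrite mulfV ?gt_eqF.
nra.
Qed.

End QuadraticForm.

Section Rayleigh.
Variables (R : realType) (d : nat) (A : 'M[R]_d).
Hypothesis A_sym : A^T = A.
Local Open Scope classical_set_scope.

Lemma continuous_qform_row (B : 'M[R]_d) :
  continuous (fun w : 'rV[R]_d => qform B w^T).
Proof.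
have contD := @pseudometric_normed_Zmodule.add_continuous R R^o.
have -> : (fun w : 'rV[R]_d => qform B w^T) =
    (fun w => \sum_i (w 0 i * \sum_j (B i j * w 0 j))).
  apply: funext => w; apply: eq_bigr => i _.
  by rewrite !mxE; congr (_ * _); apply: eq_bigr => j _; rewrite !mxE.
apply: (@continuous_big _ _ _ 0 _ contD) => i _ w; apply: continuousM.
  exact: coord_continuous.
apply: (@continuous_big _ _ _ 0 _ contD) => j _ {}w; apply: continuousM.
  exact: cst_continuous.
exact: coord_continuous.
Qed.

Lemma qform_min_unit_sphere : (0 < d)%N ->
  exists2 c : 'cV[R]_d, vdot c c = 1 &
    forall w, vdot w w = 1 -> qform A c <= qform A w.
Proof.
move=> d_gt0.
pose sphere := [set w : 'rV[R]_d | qform 1%:M w^T = 1].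
have qform1 (w : 'rV[R]_d) : qform 1%:M w^T = vdot w^T w^T by rewrite /qform mul1mx.
pose box := [set w : 'rV[R]_d | forall i, `[-1, 1] (w ord0 i)].
have box_compact : compact box.
  exact: rV_compact (fun=> @segment_compact R (-1) 1).
have sphere_closed : closed sphere.
  by have := (continuous_closedP _).1 (continuous_qform_row (B := 1%:M)) _ (@closed_eq R 1).
have sphere_box : sphere `<=` box.
  move=> w; rewrite /sphere /= qform1 => w1 i.
  have : w ord0 i ^+ 2 <= 1.
    rewrite -w1 /vdot (bigD1 i) //= !mxE expr2 lerDl sumr_ge0 // => j _.
    by rewrite !mxE -expr2 sqr_ge0.
  by rewrite /= in_itv /= => wi; apply/andP; split; nra.
have sphere0 : sphere !=set0.
  exists (\row_j ((j == Ordinal d_gt0)%:R : R)).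
  rewrite /sphere /= qform1 /vdot (bigD1 (Ordinal d_gt0)) //= big1.
    by rewrite !mxE eqxx mulr1 addr0.
  by move=> j /negPf j_neq; rewrite !mxE j_neq mulr0.
have [c] := compact_EVT_min sphere0
  (subclosed_compact sphere_closed box_compact sphere_box)
  (continuous_subspaceT (continuous_qform_row (B := A))).
rewrite inE /sphere /= qform1 => c1 c_min.
exists c^T => // w w1; rewrite -[w]trmxK; apply: c_min.
by rewrite inE /sphere /= qform1 trmxK.
Qed.

Lemma rayleigh_min : (0 < d)%N ->
  exists m : R, (exists2 c : 'cV[R]_d, c != 0 & A *m c = m *: c) /\
    forall v, m * vdot v v <= qform A v.
Proof.
move=> d_gt0; have [c c1 c_min] := qform_min_unit_sphere d_gt0.
exists (qform A c).
have m_le v : qform A c * vdot v v <= qform A v.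
  have [->|v0] := eqVneq v 0; first by rewrite /qform vdot0l mulmx0 vdotC vdot0l mulr0.
  pose s := Num.sqrt (vdot v v).
  have s_gt0 : 0 < s by rewrite sqrtr_gt0 vdot_self_gt0.
  have ss : s ^+ 2 = vdot v v by rewrite sqr_sqrtr // vdot_self_ge0.
  have := c_min (s^-1 *: v); rewrite qformZ vdotZl vdotZr mulrA -expr2 -ss -exprMn.
  rewrite mulVf ?gt_eqF // expr1n => /(_ erefl).
  by rewrite -(ler_pM2l (exprn_gt0 2 s_gt0)) mulrA -exprMn mulfV ?gt_eqF // expr1n mul1r mulrC.
split=> //; exists c.
  by apply: contra_eq_neq c1 => ->; rewrite vdot0l eq_sym oner_eq0.
apply/eqP; rewrite -subr_eq0 -mul_scalar_mx -mulmxBl; apply/eqP.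
have B_sym : (A - (qform A c)%:M)^T = A - (qform A c)%:M.
  by rewrite linearB /= A_sym tr_scalar_mx.
have qformB v : qform (A - (qform A c)%:M) v = qform A v - qform A c * vdot v v.
  by rewrite /qform mulmxBl mul_scalar_mx vdotBr vdotZr.
have psd v : 0 <= qform (A - (qform A c)%:M) v by rewrite qformB subr_ge0.
have q0 : qform (A - (qform A c)%:M) c = 0 by rewrite qformB c1 mulr1 subrr.
exact: (psd_qform_eq0 B_sym psd q0).
Qed.

End Rayleigh.

Section SymmetricSpectrum.
Variables (R : realType) (d : nat) (A : 'M[R]_d).
Hypothesis A_sym : A^T = A.
Implicit Types (v : 'cV[R]_d).
Local Open Scope classical_set_scope.

(* [eigenvalue] refers to row eigenvectors; for symmetric [A] transposition switches sides. *)
Lemma eigenvalue_col (a : R) (c : 'cV[R]_d) : c != 0 -> A *m c = a *: c -> eigenvalue A a.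
Proof.
move=> c0 Ac; apply/eigenvalueP; exists c^T; last by rewrite trmx_eq0.
by rewrite -{1}A_sym -trmx_mul Ac linearZ.
Qed.

Lemma eigenvalue_colP (a : R) : eigenvalue A a -> exists2 c : 'cV[R]_d, c != 0 & A *m c = a *: c.
Proof.
move=> /eigenvalueP [w wA w0]; exists w^T; first by rewrite trmx_eq0.
by rewrite -{1}A_sym -trmx_mul wA linearZ.
Qed.

Lemma qform_ge_lambda_min lmin : (0 < d)%N -> is_lambda_min A lmin ->
  forall v, lmin * vdot v v <= qform A v.
Proof.
move=> d_gt0 [_ lmin_le] v; have [m [[c c0 Ac] m_le]] := rayleigh_min A_sym d_gt0.
apply: le_trans (m_le v).
exact: (ler_wpM2r (vdot_self_ge0 v) (lmin_le _ (eigenvalue_col c0 Ac))).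
Qed.

Lemma qform_le_lambda_max lmax : (0 < d)%N -> is_lambda_max A lmax ->
  forall v, qform A v <= lmax * vdot v v.
Proof.
move=> d_gt0 [_ lmax_ge] v.
have NA_sym : (- A)^T = - A by rewrite linearN /= A_sym.
have [m [[c c0 Ac] m_le]] := rayleigh_min NA_sym d_gt0.
have := m_le v; rewrite /qform mulNmx vdotNr lerNr -mulNr => /le_trans; apply.
have Ac' : A *m c = - m *: c by rewrite -[A]opprK mulNmx Ac scaleNr.
exact: (ler_wpM2r (vdot_self_ge0 v) (lmax_ge _ (eigenvalue_col c0 Ac'))).
Qed.

Lemma spectral_norm_psd lmax : 0 <= lmax ->
  (forall v, 0 <= qform A v <= lmax * vdot v v) ->
  (exists2 c : 'cV[R]_d, c != 0 & A *m c = lmax *: c) -> spectral_norm A = lmax.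
Proof.
move=> lmax0 A_bounds [c c0 Ac].
have A_psd v : 0 <= qform A v by case/andP: (A_bounds v).
have A_qle v : qform A v <= lmax * vdot v v by case/andP: (A_bounds v).
have A_le v : vnorm v <= 1 -> vnorm (A *m v) <= lmax.
  rewrite !vnormE -sqrtr1 ler_sqrt // => v1.
  rewrite -(ger0_norm lmax0) -sqrtr_sqr ler_sqrt ?sqr_ge0 //.
  apply: le_trans (psd_mulmx_bound A_sym A_psd lmax0 A_qle v) _.
  by rewrite ler_piMr ?sqr_ge0.
pose s := vnorm c.
have s_gt0 : 0 < s by rewrite /s vnormE sqrtr_gt0 vdot_self_gt0.
have unit_c : vnorm (s^-1 *: c) = 1.
  by rewrite vnormZ ger0_norm ?invr_ge0 ?ltW // mulVf ?gt_eqF.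
have A_unit_c : vnorm (A *m (s^-1 *: c)) = lmax.
  by rewrite -scalemxAr Ac scalerA mulrC -scalerA vnormZ unit_c mulr1 ger0_norm.
pose E := [set r : R | exists v : 'cV[R]_d, vnorm v <= 1 /\ r = vnorm (A *m v)].
have E_lmax : E lmax by exists (s^-1 *: c); rewrite unit_c A_unit_c.
have E_ub : ubound E lmax by move=> _ [v [v1 ->]]; exact: A_le.
apply/le_anti/andP; split; first exact: ge_sup (ex_intro _ lmax E_lmax) E_ub.
exact: sup_upper_bound (conj (ex_intro _ lmax E_lmax) (ex_intro _ lmax E_ub)) _ E_lmax.
Qed.

End SymmetricSpectrum.

Section GramMatrix.
Variables (R : realType) (n d : nat) (X : 'M[R]_(n, d)).

Lemma gram_sym : (X^T *m X)^T = X^T *m X.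
Proof. by rewrite trmx_mul trmxK. Qed.

Lemma gd_step_sym (eta : R) :
  (1%:M - eta *: (X^T *m X))^T = 1%:M - eta *: (X^T *m X).
Proof. by rewrite linearB /= linearZ /= gram_sym tr_scalar_mx. Qed.

Lemma qform_gram (v : 'cV[R]_d) : qform (X^T *m X) v = vdot (X *m v) (X *m v).
Proof. by rewrite /qform -mulmxA vdot_mulmxr trmxK. Qed.

Lemma lambda_min_gram_gt0 lmin : X^T *m X \in unitmx ->
  is_lambda_min (X^T *m X) lmin -> 0 < lmin.
Proof.
move=> X_unit [/(eigenvalue_colP gram_sym) [c c0 Ac] _].
have c_gt0 : 0 < vdot c c by rewrite vdot_self_gt0.
have : lmin * vdot c c = vdot (X *m c) (X *m c) by rewrite -qform_gram /qform Ac vdotZr.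
rewrite lt_def -(pmulr_lge0 _ c_gt0) => ->; rewrite vdot_self_ge0 andbT.
apply: contra_neq c0 => lmin0.
by rewrite -(mulKmx X_unit c) Ac lmin0 scale0r mulmx0.
Qed.

End GramMatrix.

Section LoopedTransformer.
Variables (R : realType) (n d : nat) (X : 'M[R]_(n, d)).
Let P : 'M[R]_(d + 1) := block_mx 1%:M 0 0 0.

(* Only the last row of the mask is nonzero, so only the query row moves. *)
Lemma Attn_block (y : 'cV[R]_n) (p : 'rV[R]_d) (a : 'M[R]_1) :
  Attn (block_mx X y p a) 1%:M P = block_mx 0 0 ((p *m X^T + a *m y^T) *m X) 0.
Proof.
have mask0 m k (M : 'M[R]_(m, k)) : map2_mx *%R 0 M = 0.
  by apply/matrixP => i j; rewrite !mxE mul0r.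
have mask1 m k (M : 'M[R]_(m, k)) : map2_mx *%R (const_mx 1) M = M.
  by apply/matrixP => i j; rewrite !mxE mul1r.
rewrite /Attn mulmx1 tr_block_mx mulmx_block /attn_mask map2_block_mx.
by rewrite !mask0 mask1 !mulmx_block !mul0mx !mulmx0 !mulmx1 !addr0.
Qed.

Variables (theta : 'cV[R]_d) (alpha eta : R).
Let B : 'M[R]_d := 1%:M - eta *: (X^T *m X).

Lemma loopZ_regression t :
  loopZ (block_mx X (X *m theta) 0 alpha%:M) 1%:M P (fun=> eta) t =
  block_mx X (X *m theta) (alpha *: ((iter t (mulmx B) theta)^T - theta^T)) alpha%:M.
Proof.
elim: t => [|t IH] /=; first by rewrite subrr scaler0.
rewrite IH Attn_block scale_block_mx opp_block_mx add_block_mx !scaler0 !oppr0 !addr0.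
congr block_mx; set u := iter t (mulmx B) theta.
rewrite mul_scalar_mx trmx_mul -scalemxAl mulmxBl -scalerDr subrK -scalemxAl -mulmxA.
rewrite trmx_mul gd_step_sym mulmxBr mulmx1 -scalemxAr.
by apply/matrixP => i j; rewrite !mxE; ring.
Qed.

Lemma TF_regression T :
  TF (block_mx X (X *m theta) 0 alpha%:M) 1%:M P (fun=> eta) T =
  alpha *: (theta - iter T (mulmx B) theta).
Proof.
apply/matrixP => i j; rewrite (ord1 j) /TF loopZ_regression mxE block_mxEdl !mxE.
by rewrite -mulrN opprB.
Qed.

End LoopedTransformer.

Section Descent.
Variables (R : realType) (d : nat).

Lemma vdot_iter_le (B : 'M[R]_d) (c : R) : B^T = B -> 0 <= c ->
  (forall v, 0 <= qform B v <= c * vdot v v) ->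
  forall T u, `|vdot (iter T (mulmx B) u) u| <= c ^+ T * vdot u u.
Proof.
move=> B_sym c0 B_bounds T u.
have B_psd v : 0 <= qform B v by case/andP: (B_bounds v).
have B_le v : qform B v <= c * vdot v v by case/andP: (B_bounds v).
have iter_le t :
    vdot (iter t (mulmx B) u) (iter t (mulmx B) u) <= (c ^+ 2) ^+ t * vdot u u.
  elim: t => [|t IH] /=; first by rewrite expr0 mul1r.
  apply: le_trans (psd_mulmx_bound B_sym B_psd c0 B_le _) _.
  by rewrite [_ ^+ t.+1]exprS -mulrA; exact: (ler_wpM2l (sqr_ge0 c) IH).
have := iter_le T; set x := iter T (mulmx B) u => x_le.
have := le_trans (vdot_cauchy_schwarz x u) (ler_wpM2r (vdot_self_ge0 u) x_le).
rewrite -exprM mulnC exprM -mulrA -expr2 -exprMn.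
have : 0 <= c ^+ T * vdot u u by rewrite mulr_ge0 ?exprn_ge0 ?vdot_self_ge0.
rewrite ler_norml; move: (vdot x u) (c ^+ T * vdot u u) => a b b0 ab.
by apply/andP; split; nra.
Qed.

Lemma qform_gd_step (A : 'M[R]_d) (lmin lmax : R) : 0 < lmin <= lmax ->
  (forall v, lmin * vdot v v <= qform A v <= lmax * vdot v v) ->
  forall v, 0 <= qform (1%:M - lmax^-1 *: A) v <= (1 - lmin / lmax) * vdot v v.
Proof.
case/andP=> lmin_gt0 lmin_le_lmax A_bounds v.
have lmax_gt0 : 0 < lmax := lt_le_trans lmin_gt0 lmin_le_lmax.
rewrite /qform mulmxBl mul1mx -scalemxAl vdotBr vdotZr -/(qform A v).
have /andP [A_ge A_le] := A_bounds v.
have le_vv : lmax^-1 * qform A v <= vdot v v by rewrite ler_pdivrMl // mulrC.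
have ge_lmin : lmin / lmax * vdot v v <= lmax^-1 * qform A v.
  rewrite mulrAC mulrC; apply: ler_wpM2l A_ge.
  by rewrite invr_ge0 ltW.
by apply/andP; split; lra.
Qed.

End Descent.

Lemma rate_le_expR (R : realType) (lmin lmax : R) (T : nat) : 0 < lmin <= lmax ->
  (1 - lmin / lmax) ^+ T <= expR (- (T%:R / (2 * (lmax / lmin)))).
Proof.
case/andP=> lmin_gt0 lmin_le_lmax; have lmax_gt0 := lt_le_trans lmin_gt0 lmin_le_lmax.
have r0 : 0 <= lmin / lmax by rewrite divr_ge0 // ltW.
have r1 : 1 - lmin / lmax <= expR (- (lmin / lmax)) by exact: expR_ge1Dx.
apply: (@le_trans _ _ (expR (- (lmin / lmax)) ^+ T)).
  by rewrite lerXn2r ?nnegrE ?expR_ge0 ?subr_ge0 ?ler_pdivrMr ?mul1r.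
rewrite -expRM_natl ler_expR mulrN lerN2.
have -> : T%:R / (2 * (lmax / lmin)) = T%:R * (lmin / lmax) / 2.
  by field; rewrite !gt_eqF.
have : 0 <= T%:R * (lmin / lmax) by rewrite mulr_ge0.
lra.
Qed.

Unset Implicit Arguments.
Theorem mainTheorem4 (R : realType) (n d : nat) (hd : (1 <= d)%N) (hnd : (d < n)%N)
  (X : 'M[R]_(n, d)) (hX : X^T *m X \in unitmx)
  (theta : 'cV[R]_d) (htheta : vnorm theta = 1)
  (alpha : R) (halpha : alpha != 0)
  (T : nat) (hT : (1 <= T)%N)
  (lmin lmax : R)
  (hmin : is_lambda_min (X^T *m X) lmin) (hmax : is_lambda_max (X^T *m X) lmax) :
  let y : 'cV[R]_n := X *m theta in
  let q0 : 'cV[R]_d := 0 in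
  let Z0 : 'M[R]_(n + 1, d + 1) := block_mx X y q0^T (alpha%:M : 'M_1) in
  let Q : 'M[R]_(d + 1) := 1%:M in
  let P : 'M[R]_(d + 1) :=
    block_mx (1%:M : 'M_d) (0 : 'M_(d, 1)) (0 : 'M_(1, d)) (0 : 'M_1) in
  let L := spectral_norm (X^T *m X) in
  let eta : nat -> R := fun _ => L^-1 in
  let kappa := lmax / lmin in
  `| vdot (TF Z0 Q P eta T) theta - alpha | <= `|alpha| * expR (- (T%:R / (2 * kappa))).
Proof.
cbv zeta.
have lmin_gt0 := lambda_min_gram_gt0 hX hmin.
have lmin_le_lmax : lmin <= lmax := hmax.2 _ hmin.1.
have lmax_gt0 : 0 < lmax := lt_le_trans lmin_gt0 lmin_le_lmax.
have A_bounds v : lmin * vdot v v <= qform (X^T *m X) v <= lmax * vdot v v.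
  by rewrite qform_ge_lambda_min ?qform_le_lambda_max //; exact: gram_sym.
have A_psd_bounds v : 0 <= qform (X^T *m X) v <= lmax * vdot v v.
  by rewrite (proj2 (andP (A_bounds v))) qform_gram vdot_self_ge0.
have L_lmax : spectral_norm (X^T *m X) = lmax.
  apply: (spectral_norm_psd (gram_sym X) (ltW lmax_gt0) A_psd_bounds).
  exact: (eigenvalue_colP (gram_sym X) hmax.1).
have theta1 : vdot theta theta = 1.
  by rewrite -(sqr_sqrtr (vdot_self_ge0 theta)) -vnormE htheta expr1n.
rewrite L_lmax trmx0 TF_regression vdotZl vdotBl theta1.
rewrite mulrBr mulr1 addrAC subrr add0r normrN normrM.
apply: ler_wpM2l => //.
apply: le_trans (vdot_iter_le (gd_step_sym X _) _ (qform_gd_step _ A_bounds) T theta) _.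
- by rewrite subr_ge0 ler_pdivrMr // mul1r.
- by rewrite lmin_gt0 lmin_le_lmax.
by rewrite theta1 mulr1 rate_le_expR // lmin_gt0.
Qed.
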